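(* Let $K\ge1$, $T\ge1$ and let $\ell_1,\dots,\ell_T\in[0,1]^K$. Then the regret of AdaHedge satisfies \[ \mathcal{R}^{\mathrm{ah}}_T\le 2\sqrt{V^{\mathrm{ah}}_T\ln K}+\tfrac43\ln K+2. \]
   Context: Hedge setting: $K$ experts; in round $t$ the learner chooses a probability vector $w_t$, then $\ell_t$ is revealed and the learner suffers $h_t=\sum_kw_{t,k}\ell_{t,k}$. Write $L_{t,k}=\sum_{s=1}^t\ell_{s,k}$ ($L_{0,k}=0$), $L^*_t=\min_kL_{t,k}$, $H_T=\sum_{t\le T}h_t$, regret $\mathcal{R}_T=H_T-L^*_T$. Exponential weights with learning rate $\eta\in(0,\infty]$ at time $t$: $w_{t,k}=e^{-\eta L_{t-1,k}}/\sum_je^{-\eta L_{t-1,j}}$ if $\eta<\infty$; for $\eta=\infty$, $w_t$ is uniform on $\{k:L_{t-1,k}=L^*_{t-1}\}$. With learning rate $\eta_t$ in round $t$: mix loss $m_t=-\frac1{\eta_t}\ln\sum_kw_{t,k}e^{-\eta_t\ell_{t,k}}$ if $\eta_t<\infty$, $m_t=L^*_t-L^*_{t-1}$ if $\eta_t=\infty$; mixability gap $\delta_t=h_t-m_t$; loss variance $v_t=\sum_kw_{t,k}(\ell_{t,k}-h_t)^2$. AdaHedge: $\Delta^{\mathrm{ah}}_0=0$; in round $t$, $\eta^{\mathrm{ah}}_t=\ln K/\Delta^{\mathrm{ah}}_{t-1}$ ($=\infty$ if $\Delta^{\mathrm{ah}}_{t-1}=0$), weights are exponential weights with learning rate $\eta^{\mathrm{ah}}_t$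 from $L_{t-1}$, and $\Delta^{\mathrm{ah}}_t=\Delta^{\mathrm{ah}}_{t-1}+\delta^{\mathrm{ah}}_t$. $V^{\mathrm{ah}}_T=\sum_{t=1}^Tv^{\mathrm{ah}}_t$ is the cumulative loss variance of AdaHedge's weights and $\mathcal{R}^{\mathrm{ah}}_T$ its regret. *)

From HB Require Import structures.
From mathcomp Require Import all_boot all_order all_algebra.
From mathcomp Require Import all_classical all_reals all_analysis.
Set Implicit Arguments. Unset Strict Implicit. Unset Printing Implicit Defensive.
Import Order.TTheory GRing.Theory Num.Theory.
Local Open Scope ring_scope.

Section Hedge.
Variables (R : realType) (K : nat).

(* Minimum of f over the experts 'I_K (0 if K = 0, which never occurs
   under the standing assumption K >= 1). *)
Definition minK (f : 'I_K -> R) : R :=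
  match enum 'I_K with
  | [::] => 0
  | k :: _ => \big[Num.min/f k]_(j <- enum 'I_K) f j
  end.

(* Losses: ell t k is the loss of expert k in round t (rounds t >= 1). *)
Variable ell : nat -> 'I_K -> R.

Definition cumL (t : nat) (k : 'I_K) : R := \sum_(1 <= s < t.+1) ell s k.

Definition Lstar (t : nat) : R := minK (cumL t).

(* Learning rates in (0, oo]: Some eta = finite eta, None = infinity. *)
Definition exp_weights (eta : option R) (Lprev : 'I_K -> R) (k : 'I_K) : R :=
  match eta with
  | Some e => expR (- e * Lprev k) / \sum_(j < K) expR (- e * Lprev j)
  | None =>
      if Lprev k == minK Lprev
      then (#|[set j : 'I_K | Lprev j == minK Lprev]|%:R)^-1 else 0
  end.

Definition hedge_loss (w l : 'I_K -> R) : R := \sum_(k < K) w k * l k.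

Definition mix_loss (t : nat) (eta : option R) (w : 'I_K -> R) : R :=
  match eta with
  | Some e => - e^-1 * ln (\sum_(k < K) w k * expR (- e * ell t k))
  | None => Lstar t - Lstar t.-1
  end.

Definition loss_var (w l : 'I_K -> R) : R :=
  \sum_(k < K) w k * (l k - hedge_loss w l) ^+ 2.

Definition ah_eta_of (D : R) : option R :=
  if D == 0 then None else Some (ln K%:R / D).

Fixpoint ah_Delta (t : nat) : R :=
  match t with
  | 0 => 0
  | t'.+1 =>
      let eta := ah_eta_of (ah_Delta t') in
      let w := exp_weights eta (cumL t') in
      ah_Delta t' + (hedge_loss w (ell t'.+1) - mix_loss t'.+1 eta w)
  end.

Definition ah_eta (t : nat) : option R := ah_eta_of (ah_Delta t.-1).
Definition ah_weights (t : nat) : 'I_K -> R := exp_weights (ah_eta t) (cumL t.-1).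

Definition ah_h (t : nat) : R := hedge_loss (ah_weights t) (ell t).
Definition ah_delta (t : nat) : R := ah_h t - mix_loss t (ah_eta t) (ah_weights t).
Definition ah_v (t : nat) : R := loss_var (ah_weights t) (ell t).

Definition ah_regret (T : nat) : R := \sum_(1 <= t < T.+1) ah_h t - Lstar T.
Definition ah_V (T : nat) : R := \sum_(1 <= t < T.+1) ah_v t.

End Hedge.

(* Regret decomposes as [H_T - L*_T = M_T - L*_T + Delta_T], where [M_T] is the
   cumulative mix loss.  The mix losses telescope to the potential
   [Phi_t(eta) = -1/eta ln (1/K sum_k exp (-eta L_(t,k)))], which can only increase
   when the learning rate decreases, and [Phi_T(eta) <= L*_T + ln K / eta]; since
   AdaHedge uses [eta_T = ln K / Delta_(T-1)], this gives [R_T <= 2 Delta_T].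
   In each round the mixability gap lies in [0, 1], and Bernstein's inequality for
   the exponential gives [delta_t (2/eta_t - 2/3) <= v_t], i.e.
   [2 delta_t Delta_(t-1) <= ln K v_t + 2/3 ln K delta_t].  Summing these with
   [delta_t^2 <= delta_t] yields [Delta_T^2 <= ln K V_T + (2/3 ln K + 1) Delta_T],
   hence [Delta_T <= sqrt (V_T ln K) + 2/3 ln K + 1].  With a single expert
   the regret is zero. *)

From HB Require Import structures.
From mathcomp Require Import all_boot all_order all_algebra.
From mathcomp Require Import all_classical all_reals all_analysis.
From mathcomp Require Import ring lra.
Import Order.TTheory GRing.Theory Num.Theory.
Import numFieldNormedType.Exports.
Set Implicit Arguments. Unset Strict Implicit. Unset Printing Implicit Defensive.
Local Open Scope ring_scope.

Section ExpInequalities.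
Variable R : realType.

Lemma le_derive_ge0 (f df : R -> R) (a b : R) :
  (forall x : R, is_derive x (1 : R) f (df x)) -> (forall x, a < x < b -> 0 <= df x) ->
  a <= b -> f a <= f b.
Proof.
move=> fd df_ge0 ab.
have cf : continuous f.
  by move=> x; apply/differentiable_continuous/derivable1_diffP; case: (fd x).
apply: (@ger0_derive1_le_cc _ f a b) => //.
- move=> x; rewrite in_itv derive1E => xab; case: (fd x) => _ ->; exact: df_ge0.
- exact: continuous_subspaceT.
- by rewrite in_itv /= lexx ab.
- by rewrite in_itv /= lexx ab.
Qed.

Lemma expR_taylor2_gap_nondecreasing (x y : R) : x <= y ->
  expR x - (1 + x + x ^+ 2 / 2) <= expR y - (1 + y + y ^+ 2 / 2).
Proof.
move=> xy; apply: (@le_derive_ge0 (fun x => expR x - (1 + x + x ^+ 2 / 2))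
                                (fun x => expR x - (1 + x))) => //.
- by move=> z; apply: trigger_derive; rewrite /GRing.scale /=; field.
- by move=> z _; rewrite subr_ge0 expR_ge1Dx.
Qed.

Lemma expR_ge_taylor2 (y : R) : 0 <= y -> 1 + y + y ^+ 2 / 2 <= expR y.
Proof.
move/expR_taylor2_gap_nondecreasing.
by rewrite expR0 expr0n /= mul0r !addr0 subrr subr_ge0.
Qed.

Lemma expR_le_taylor2 (y : R) : y <= 0 -> expR y <= 1 + y + y ^+ 2 / 2.
Proof.
move/expR_taylor2_gap_nondecreasing.
by rewrite expR0 expr0n /= mul0r !addr0 subrr subr_le0.
Qed.

(* The (2,1) Pade approximant of [expR] dominates it on [0, 3). *)
Lemma expR_pade (y : R) : 0 <= y -> expR y * (6 - 2 * y) <= 6 + 4 * y + y ^+ 2.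
Proof.
move=> y0.
have pade_mono : (6 + 4 * 0 + 0 ^+ 2) * expR (- 0) - (6 - 2 * 0) <=
                 (6 + 4 * y + y ^+ 2) * expR (- y) - (6 - 2 * y).
  apply: (@le_derive_ge0 (fun x => (6 + 4 * x + x ^+ 2) * expR (- x) - (6 - 2 * x))
                         (fun x => 2 - (2 + 2 * x + x ^+ 2) * expR (- x))) => //.
    by move=> z; apply: trigger_derive; rewrite /GRing.scale /=; field.
  move=> z /andP[z0 _]; have := expR_ge_taylor2 (ltW z0); have ez := expR_gt0 z.
  by rewrite expRN subr_ge0 ler_pdivrMr //; lra.
move: pade_mono; rewrite oppr0 expR0 expr0n /= !mulr0 !addr0 subr0 mulr1 subrr.
rewrite subr_ge0 expRN => /(ler_wpM2r (ltW (expR_gt0 y))).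
by rewrite divfK ?gt_eqF ?expR_gt0 // mulrC.
Qed.

(* For [y > 0] this is the Pade bound, whose quadratic coefficient [3 / (6 - 2 y)] grows with [y]. *)
Lemma expR_le_bernstein (e y : R) : 0 < e < 3 -> y <= e ->
  expR y <= 1 + y + y ^+ 2 * (3 / (6 - 2 * e)).
Proof.
move=> /andP[e0 e3] ye.
have d0 : 0 < 6 - 2 * e by lra.
have y2 : 0 <= y ^+ 2 by exact: sqr_ge0.
have [y_le0 | y_gt0] := leP y 0.
  apply: le_trans (expR_le_taylor2 y_le0) _; rewrite lerD2l ler_wpM2l //.
  by rewrite ler_pdivlMr // mulrC -ler_pdivlMr //; lra.
have dy : 0 < 6 - 2 * y by lra.
have : expR y <= (6 + 4 * y + y ^+ 2) / (6 - 2 * y).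
  by rewrite ler_pdivlMr // expR_pade // ltW.
move/le_trans; apply.
have -> : (6 + 4 * y + y ^+ 2) / (6 - 2 * y) = 1 + y + y ^+ 2 * (3 / (6 - 2 * y)).
  by field; lra.
rewrite lerD2l ler_wpM2l // ler_pdivrMr // mulrAC ler_pdivlMr //; lra.
Qed.

Lemma expR_tangent (a b : R) : expR a * (1 + (b - a)) <= expR b.
Proof.
rewrite -[b in X in _ <= X](subrK a) expRD mulrC ler_pM2r ?expR_gt0 //.
exact: expR_ge1Dx.
Qed.

Lemma expR_scale_le (p z : R) : 0 <= p <= 1 -> expR (p * z) <= 1 + p * (expR z - 1).
Proof.
move=> /andP[p0]; rewrite -subr_ge0 => p1.
have := lerD (ler_wpM2l p0 (expR_tangent (p * z) z))
             (ler_wpM2l (p1 : 0 <= 1 - p) (expR_tangent (p * z) 0)).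
rewrite expR0; have -> : p * (expR (p * z) * (1 + (z - p * z))) +
    (1 - p) * (expR (p * z) * (1 + (0 - p * z))) = expR (p * z) by ring.
lra.
Qed.

Lemma scaled_ln_le (e a X : R) : 0 < e -> expR (- e * a) <= X -> - e^-1 * ln X <= a.
Proof.
move=> e0 hX; have : - e * a <= ln X.
  by rewrite -ler_expR lnK // posrE (lt_le_trans (expR_gt0 _) hX).
move=> lnX; rewrite -(ler_pM2l e0) mulrA mulrN mulfV ?gt_eqF // mulN1r; lra.
Qed.

Lemma le_scaled_ln (e a X : R) : 0 < e -> 0 < X -> X <= expR (- e * a) -> a <= - e^-1 * ln X.
Proof.
move=> e0 X0 hX; have lnX : ln X <= - e * a by rewrite -ler_expR lnK // posrE.
rewrite -(ler_pM2l e0) mulrA mulrN mulfV ?gt_eqF // mulN1r; lra.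
Qed.

Lemma le_sqrt_add_of_sqr_le (D a b : R) : 0 <= D -> 0 <= a -> 0 <= b ->
  D ^+ 2 <= a + b * D -> D <= Num.sqrt a + b.
Proof.
move=> D0 a0 b0 hD; have s0 := sqrtr_ge0 a.
have [Db | bD] := leP D b; first lra.
have : (D - b) ^+ 2 <= a by nra.
by move/ler_wsqrtr; rewrite sqrtr_sqr ger0_norm; lra.
Qed.

End ExpInequalities.

Section FiniteSums.
Variables (R : realType) (I : finType).

Lemma le_sum_nonneg (F : I -> R) i : (forall j, 0 <= F j) -> F i <= \sum_j F j.
Proof. by move=> F0; rewrite (bigD1 i) //= lerDl sumr_ge0. Qed.

Lemma expR_jensen (w x : I -> R) : (forall i, 0 <= w i) -> \sum_i w i = 1 ->
  expR (\sum_i w i * x i) <= \sum_i w i * expR (x i).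
Proof.
move=> w0 w1; set c := \sum_i w i * x i.
apply: le_trans (ler_sum _ (fun i _ => ler_wpM2l (w0 i) (expR_tangent c (x i)))).
have -> : \sum_i w i * (expR c * (1 + (x i - c))) =
    expR c * (\sum_i w i + \sum_i w i * x i - c * \sum_i w i).
  have -> : \sum_i w i * (expR c * (1 + (x i - c))) =
      \sum_i (expR c * w i + expR c * (w i * x i) - (expR c * c) * w i).
    by apply: eq_bigr => i _; ring.
  by rewrite sumrB big_split /= -!mulr_sumr; ring.
by rewrite w1 -/c; lra.
Qed.

(* Jensen's inequality for the concave map [u |-> u ^ p], in exponential coordinates. *)
Lemma mean_expR_scale_le (x : I -> R) (p : R) : (0 < #|I|)%N -> 0 <= p <= 1 ->
  (\sum_i expR (p * x i)) / #|I|%:R <= expR (p * ln ((\sum_i expR (x i)) / #|I|%:R)).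
Proof.
move=> I0 p01; set n := #|I|%:R; set s := ln _.
have n0 : 0 < n by rewrite ltr0n.
have sum0 : 0 < \sum_i expR (x i).
  case/card_gt0P: I0 => i _.
  by apply: lt_le_trans (expR_gt0 (x i)) (le_sum_nonneg _ _) => j; exact: expR_ge0.
have mean0 : 0 < (\sum_i expR (x i)) / n by exact: divr_gt0.
have es : expR s = (\sum_i expR (x i)) / n by rewrite /s lnK ?posrE.
have term i : expR (p * x i) <= expR (p * s) * (1 + p * (expR (x i - s) - 1)).
  have -> : expR (p * x i) = expR (p * s) * expR (p * (x i - s)).
    by rewrite -expRD; congr expR; ring.
  rewrite ler_pM2l ?expR_gt0 //.
  exact: expR_scale_le.
rewrite ler_pdivrMr //; apply: le_trans (ler_sum _ (fun i _ => term i)) _.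
have -> : \sum_i expR (p * s) * (1 + p * (expR (x i - s) - 1)) =
    \sum_i (expR (p * s) * (1 - p) + expR (p * s) * p * expR (- s) * expR (x i)).
  by apply: eq_bigr => i _; rewrite expRD; ring.
have sum_es : expR (- s) * \sum_i expR (x i) = n.
  by rewrite expRN es invf_div divfK // gt_eqF.
rewrite big_split /= sumr_const -mulr_sumr -mulrA sum_es -/n -mulr_natr.
by rewrite le_eqVlt; apply/orP; left; apply/eqP; ring.
Qed.

End FiniteSums.

Lemma bigmin_seq_attained (R : realType) (I : eqType) (f : I -> R) x s :
  \big[Num.min/x]_(i <- s) f i = x \/
  exists2 j, j \in s & \big[Num.min/x]_(i <- s) f i = f j.
Proof.
elim: s => [|a s IH]; first by left; rewrite big_nil.
rewrite big_cons; set m := \big[Num.min/x]_(i <- s) f i in IH *.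
have [fa | fa] := leP (f a) m; first by right; exists a; rewrite ?mem_head ?min_l.
case: IH => [->|[j js ->]]; first by left.
by right; exists j => //; rewrite in_cons js orbT.
Qed.

Section ExponentialWeights.
Variables (R : realType) (K : nat).
Hypothesis K_gt0 : (0 < K)%N.

Lemma minK_le (f : 'I_K -> R) k : minK f <= f k.
Proof.
rewrite /minK; have := mem_enum 'I_K k; rewrite inE.
by case: (enum 'I_K) => // k0 s ks; exact: ge_bigmin_seq.
Qed.

Lemma minK_attained (f : 'I_K -> R) : exists k, minK f = f k.
Proof.
rewrite /minK; have := mem_enum 'I_K (Ordinal K_gt0); rewrite inE.
case: (enum 'I_K) => // k0 s _.
by case: (bigmin_seq_attained f (f k0) (k0 :: s)) => [->|[j _ ->]]; eexists.
Qed.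

Lemma exp_weights_ge0 eta (L : 'I_K -> R) k : 0 <= exp_weights eta L k.
Proof.
case: eta => [e|] /=; last by case: ifP; rewrite ?invr_ge0 ?ler0n.
by rewrite divr_ge0 ?expR_ge0 ?sumr_ge0 // => i _; exact: expR_ge0.
Qed.

Lemma exp_weights_sum1 eta (L : 'I_K -> R) : \sum_k exp_weights eta L k = 1.
Proof.
case: eta => [e|] /=.
  rewrite -mulr_suml mulfV // gt_eqF //.
  apply: lt_le_trans (expR_gt0 (- e * L (Ordinal K_gt0))) (le_sum_nonneg _ _) => i.
  exact: expR_ge0.
have [k kmin] := minK_attained L.
have : (0 < #|[set j | L j == minK L]|)%N by apply/card_gt0P; exists k; rewrite inE kmin.
rewrite -big_mkcond /= sumr_const cardsE => minimizers_gt0.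
by rewrite -[LHS]mulr_natr mulVf // pnatr_eq0 -lt0n.
Qed.

End ExponentialWeights.

Section MixabilityGap.
Variables (R : realType) (K : nat) (w l : 'I_K -> R) (e : R).
Hypotheses (w_ge0 : forall k, 0 <= w k) (w_sum1 : \sum_k w k = 1).
Hypotheses (l01 : forall k, 0 <= l k <= 1) (e_gt0 : 0 < e).

Let S := \sum_k w k * expR (- e * l k).
Let h := hedge_loss w l.
Let gap := h - (- e^-1 * ln S).

Lemma hedge_loss_le1 : h <= 1.
Proof.
rewrite -w_sum1; apply: ler_sum => k _.
by rewrite ler_piMr //; case/andP: (l01 k).
Qed.

Lemma expR_hedge_loss_le : expR (- e * h) <= S.
Proof.
have := expR_jensen (fun k => - e * l k) w_ge0 w_sum1.
by rewrite /h /hedge_loss mulr_sumr; under eq_bigr => k _ do rewrite mulrCA.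
Qed.

Lemma mix_sum_gt0 : 0 < S.
Proof. exact: lt_le_trans (expR_gt0 _) expR_hedge_loss_le. Qed.

Lemma mix_sum_le1 : S <= 1.
Proof.
rewrite -w_sum1; apply: ler_sum => k _; rewrite ler_piMr // expR_le1 mulNr oppr_le0.
by apply: mulr_ge0; [exact: ltW | case/andP: (l01 k)].
Qed.

Lemma mixability_gap_ge0 : 0 <= gap.
Proof. by rewrite subr_ge0 scaled_ln_le // expR_hedge_loss_le. Qed.

Lemma mixability_gap_le1 : gap <= 1.
Proof.
have : 0 <= - e^-1 * ln S by rewrite le_scaled_ln ?mix_sum_gt0 // mulr0 expR0 mix_sum_le1.
by have := hedge_loss_le1; rewrite /gap => ? ?; lra.
Qed.

Let c := 3 / (6 - 2 * e).
Let v := loss_var w l.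

Lemma mix_sum_le_variance : e < 3 -> S <= expR (- e * h) * (1 + c * e ^+ 2 * v).
Proof.
move=> e3.
have -> : S = expR (- e * h) * \sum_k w k * expR (e * (h - l k)).
  rewrite /S mulr_sumr; apply: eq_bigr => k _.
  by rewrite mulrCA -expRD; congr (_ * expR _); ring.
rewrite ler_pM2l ?expR_gt0 //.
have term k : w k * expR (e * (h - l k)) <=
              w k * (1 + e * (h - l k) + (e * (h - l k)) ^+ 2 * c).
  apply: ler_wpM2l => //; apply: expR_le_bernstein; first by rewrite e_gt0.
  have := hedge_loss_le1; case/andP: (l01 k) => lk0 _ h1.
  by apply: ler_piMr; [exact: ltW | lra].
apply: le_trans (ler_sum _ (fun k _ => term k)) _.
have -> : \sum_k w k * (1 + e * (h - l k) + (e * (h - l k)) ^+ 2 * c) =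
    \sum_k (w k + (e * h) * w k - e * (w k * l k) + (c * e ^+ 2) * (w k * (l k - h) ^+ 2)).
  by apply: eq_bigr => k _; ring.
rewrite big_split /= sumrB big_split /= -!mulr_sumr w_sum1.
rewrite -/(hedge_loss w l) -/h -/(loss_var w l) -/v; lra.
Qed.

(* [2 / e - 2 / 3] is the reciprocal of the Bernstein factor [3 e / (6 - 2 e)]. *)
Lemma mixability_gap_bernstein : gap * (2 / e - 2 / 3) <= v.
Proof.
have v_ge0 : 0 <= v by apply: sumr_ge0 => k _; rewrite mulr_ge0 ?sqr_ge0.
have [e3 | e3] := leP 3 e.
  apply: le_trans v_ge0; apply: mulr_ge0_le0 mixability_gap_ge0 _.
  by rewrite subr_le0 ler_pdivrMr // mulrC mulrA ler_pdivlMr //; lra.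
have d0 : 0 < 6 - 2 * e by lra.
have gap_le : gap <= c * e * v.
  rewrite lerBlDr addrC -lerBlDr; apply: le_scaled_ln mix_sum_gt0 _ => //.
  apply: le_trans (mix_sum_le_variance e3) _.
  have -> : - e * (h - c * e * v) = - e * h + c * e ^+ 2 * v by ring.
  rewrite expRD ler_pM2l ?expR_gt0 //.
  by have := expR_ge1Dx (c * e ^+ 2 * v); lra.
have f0 : 0 <= 2 / e - 2 / 3.
  by rewrite subr_ge0 ler_pdivrMr // mulrC mulrA ler_pdivlMr //; lra.
apply: le_trans (ler_wpM2r f0 gap_le) _.
rewrite /c le_eqVlt; apply/orP; left; apply/eqP; field.
by rewrite !gt_eqF //; lra.
Qed.

End MixabilityGap.

Lemma ah_regret_single_expert (R : realType) (ell : nat -> 'I_1 -> R) T :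
  ah_regret ell T = 0.
Proof.
have h_eq t : ah_h ell t = ell t ord0.
  have := exp_weights_sum1 (ltn0Sn 0) (ah_eta ell t) (cumL ell t.-1).
  by rewrite /ah_h /hedge_loss /ah_weights !big_ord1 => ->; rewrite mul1r.
have [k kmin] := minK_attained (ltn0Sn 0) (cumL ell T).
by rewrite /ah_regret /Lstar kmin (ord1 k) /cumL (eq_bigr _ (fun t _ => h_eq t)) subrr.
Qed.

Section Potential.
Variables (R : realType) (K : nat) (ell : nat -> 'I_K -> R).
Hypothesis K_gt0 : (0 < K)%N.

Local Notation L := (cumL ell).
Local Notation Lstar := (Lstar ell).

Lemma cumL0 k : L 0 k = 0.
Proof. by rewrite /cumL big_geq. Qed.

Lemma cumLS t k : L t.+1 k = L t k + ell t.+1 k.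
Proof. by rewrite /cumL big_nat_recr. Qed.

Lemma Lstar0 : Lstar 0 = 0.
Proof. by have [k kmin] := minK_attained K_gt0 (L 0); rewrite /Lstar kmin cumL0. Qed.

Definition ew_normalizer (t : nat) (e : R) : R := \sum_k expR (- e * L t k).

(* The mix losses telescope to this potential; [None] is the learning rate infinity. *)
Definition potential (t : nat) (eta : option R) : R :=
  match eta with
  | Some e => - e^-1 * ln (ew_normalizer t e / K%:R)
  | None => Lstar t
  end.

Let K_pos : 0 < K%:R :> R. Proof. by rewrite ltr0n. Qed.

Lemma ew_normalizer_gt0 t e : 0 < ew_normalizer t e.
Proof.
apply: lt_le_trans (expR_gt0 (- e * L t (Ordinal K_gt0))) (le_sum_nonneg _ _) => k.
exact: expR_ge0.
Qed.

Lemma potential0 eta : potential 0 eta = 0.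
Proof.
case: eta => [e|] /=; last exact: Lstar0.
have -> : ew_normalizer 0 e = K%:R.
  rewrite /ew_normalizer; under eq_bigr => k _ do rewrite cumL0 mulr0 expR0.
  by rewrite sumr_const card_ord.
by rewrite mulfV ?gt_eqF // ln1 mulr0.
Qed.

Lemma mix_loss_potential t eta :
  mix_loss ell t.+1 eta (exp_weights eta (L t)) = potential t.+1 eta - potential t eta.
Proof.
case: eta => [e|] //=.
have -> : \sum_k expR (- e * L t k) / (\sum_j expR (- e * L t j)) * expR (- e * ell t.+1 k)
          = ew_normalizer t.+1 e / ew_normalizer t e.
  rewrite /ew_normalizer mulr_suml; apply: eq_bigr => k _.
  by rewrite mulrAC -expRD cumLS mulrDr.
have Z0 := ew_normalizer_gt0 t e; have Z1 := ew_normalizer_gt0 t.+1 e.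
by rewrite !ln_div ?posrE ?divr_gt0 //; ring.
Qed.

Lemma potential_None_le t e : 0 < e -> potential t None <= potential t (Some e).
Proof.
move=> e0 /=; apply: le_scaled_ln; rewrite ?divr_gt0 ?ew_normalizer_gt0 //.
rewrite ler_pdivrMr //.
have -> : expR (- e * Lstar t) * K%:R = \sum_(k < K) expR (- e * Lstar t).
  by rewrite sumr_const card_ord mulr_natr.
apply: ler_sum => k _; rewrite ler_expR !mulNr lerN2 ler_pM2l //.
exact: minK_le.
Qed.

Lemma potential_le_Lstar t e : 0 < e -> potential t (Some e) <= Lstar t + ln K%:R / e.
Proof.
move=> e0 /=; apply: scaled_ln_le => //; have [k kmin] := minK_attained K_gt0 (L t).
have -> : - e * (Lstar t + ln K%:R / e) = - e * Lstar t - ln K%:R.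
  by field; rewrite gt_eqF.
rewrite expRD expRN lnK ?posrE // ler_wpM2r ?invr_ge0 ?ler0n // /Lstar kmin.
by apply: le_sum_nonneg => j; exact: expR_ge0.
Qed.

Lemma potential_antitone t e e' : 0 < e -> e <= e' ->
  potential t (Some e') <= potential t (Some e).
Proof.
move=> e0 ee' /=; have e'0 := lt_le_trans e0 ee'.
have p01 : 0 <= e / e' <= 1.
  by rewrite divr_ge0 ?(ltW e0) ?(ltW e'0) //= ler_pdivrMr // mul1r.
apply: le_scaled_ln; rewrite ?divr_gt0 ?ew_normalizer_gt0 //.
have := mean_expR_scale_le (fun k => - e' * L t k) _ p01.
rewrite card_ord -/(ew_normalizer t e') => /(_ K_gt0).
under eq_bigr => k _ do rewrite mulrA mulrN divfK ?gt_eqF //.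
by have -> : - e * (- e'^-1 * ln (ew_normalizer t e' / K%:R)) =
  e / e' * ln (ew_normalizer t e' / K%:R) by ring.
Qed.

End Potential.

Section AdaHedge.
Variables (R : realType) (K : nat) (ell : nat -> 'I_K -> R) (T : nat).
Hypothesis K_gt1 : (1 < K)%N.
Hypothesis ell01 : forall t k, (1 <= t <= T)%N -> 0 <= ell t k <= 1.

Local Notation D := (ah_Delta ell).
Local Notation L := (cumL ell).
Local Notation lnK := (ln (K%:R : R)).

Let K_gt0 : (0 < K)%N := ltnW K_gt1.
Let ell01S t k : (t < T)%N -> 0 <= ell t.+1 k <= 1.
Proof. by move=> tT; apply: ell01; rewrite ltnS leq0n tT. Qed.

Lemma lnK_gt0 : 0 < lnK.
Proof. by rewrite ln_gt0 // ltr1n. Qed.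

Lemma ah_eta_of_gt0 d : 0 < d -> ah_eta_of K d = Some (lnK / d).
Proof. by move=> d0; rewrite /ah_eta_of gt_eqF. Qed.

Lemma ah_Delta_sum t : D t = \sum_(1 <= s < t.+1) ah_delta ell s.
Proof.
elim: t => [|t IH]; first by rewrite big_geq.
by rewrite big_nat_recr //= -IH.
Qed.

Lemma Lstar_nondecreasing t : (t < T)%N -> Lstar ell t <= Lstar ell t.+1.
Proof.
move=> tT; have [k kmin] := minK_attained K_gt0 (L t.+1).
rewrite {2}/Lstar kmin cumLS; have := minK_le (L t) k; have /andP[lk0 _] := ell01S k tT.
rewrite -/(Lstar ell t); lra.
Qed.

(* With learning rate infinity the mixability gap is that of follow-the-leader. *)
Lemma ftl_gap_bounds t : (t < T)%N ->
  0 <= hedge_loss (exp_weights None (L t)) (ell t.+1) - (Lstar ell t.+1 - Lstar ell t) <= 1.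
Proof.
move=> tT; set w := exp_weights None (L t).
have w_sum1 : \sum_k w k = 1 by exact: exp_weights_sum1.
apply/andP; split.
  rewrite subr_ge0 -[X in X <= _]mul1r -w_sum1 mulr_suml /hedge_loss.
  apply: ler_sum => k _; rewrite /w /exp_weights; case: eqP => [Lk|_]; last by rewrite !mul0r.
  rewrite ler_wpM2l ?invr_ge0 ?ler0n //.
  by have := minK_le (L t.+1) k; rewrite cumLS Lk -!/(Lstar ell _) => ?; lra.
have := hedge_loss_le1 (fun k => exp_weights_ge0 None (L t) k) w_sum1 (fun k => @ell01S t k tT).
by have := Lstar_nondecreasing tT; rewrite -/w => ? ?; lra.
Qed.

Lemma ah_delta_bounds t : (t < T)%N -> 0 <= D t -> 0 <= ah_delta ell t.+1 <= 1.
Proof.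
move=> tT; rewrite /ah_delta /ah_h /ah_weights /ah_eta /= le_eqVlt.
case/predU1P => [<-|Dpos]; first by rewrite /ah_eta_of eqxx ftl_gap_bounds.
rewrite ah_eta_of_gt0 //=.
have e0 : 0 < lnK / D t by rewrite divr_gt0 ?lnK_gt0.
have w_ge0 := exp_weights_ge0 (Some (lnK / D t)) (L t).
have w_sum1 := exp_weights_sum1 K_gt0 (Some (lnK / D t)) (L t).
by rewrite mixability_gap_ge0 ?mixability_gap_le1 // => k; exact: (@ell01S t k tT).
Qed.

Lemma ah_v_ge0 t : 0 <= ah_v ell t.
Proof. by apply: sumr_ge0 => k _; rewrite mulr_ge0 ?sqr_ge0 ?exp_weights_ge0. Qed.

Lemma ah_delta_bernstein t : (t < T)%N -> 0 <= D t ->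
  2 * ah_delta ell t.+1 * D t <= lnK * ah_v ell t.+1 + 2 / 3 * lnK * ah_delta ell t.+1.
Proof.
move=> tT D0; have /andP[d0 _] := ah_delta_bounds tT D0.
have l0 := ltW lnK_gt0; have v0 := ah_v_ge0 t.+1.
move: D0; rewrite le_eqVlt => /predU1P[<-|Dpos].
  by rewrite mulr0 addr_ge0 ?mulr_ge0.
have e0 : 0 < lnK / D t by rewrite divr_gt0 ?lnK_gt0.
rewrite /ah_delta /ah_h /ah_v /ah_weights /ah_eta /= ah_eta_of_gt0 //=.
set gap := hedge_loss _ _ - _.
have := mixability_gap_bernstein (exp_weights_ge0 (Some (lnK / D t)) (L t))
  (exp_weights_sum1 K_gt0 _ _) (fun k => @ell01S t k tT) e0.
move=> /(ler_wpM2l l0); rewrite -/gap.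
have -> : lnK * (gap * (2 / (lnK / D t) - 2 / 3)) = 2 * gap * D t - 2 / 3 * lnK * gap.
  by field; rewrite !gt_eqF ?lnK_gt0.
move=> ?; lra.
Qed.

Lemma ah_Delta_ge0 t : (t <= T)%N -> 0 <= D t.
Proof.
elim: t => [|t IH] tT //=.
by have /andP[d0 _] := ah_delta_bounds tT (IH (ltnW tT)); rewrite addr_ge0 ?IH 1?ltnW.
Qed.

Lemma ah_Delta_pred_le t : (t <= T)%N -> D t.-1 <= D t.
Proof.
case: t => [|t] tT //=; rewrite lerDl.
by have /andP[] := ah_delta_bounds tT (ah_Delta_ge0 (ltnW tT)).
Qed.

(* Summing [2 delta_t Delta_(t-1) <= lnK v_t + 2/3 lnK delta_t] with [delta_t^2 <= delta_t]. *)
Lemma ah_Delta_sqr_le t : (t <= T)%N ->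
  D t ^+ 2 <= lnK * ah_V ell t + (2 / 3 * lnK + 1) * D t.
Proof.
elim: t => [|t IH] tT; first by rewrite expr0n /= /ah_V big_geq // !mulr0 addr0.
have D0 := ah_Delta_ge0 (ltnW tT).
have /andP[d0 d1] := ah_delta_bounds tT D0.
have IHt := IH (ltnW tT); have bern := ah_delta_bernstein tT D0.
have d_sqr : ah_delta ell t.+1 ^+ 2 <= ah_delta ell t.+1 by rewrite expr2 ler_piMl.
have -> : ah_V ell t.+1 = ah_V ell t + ah_v ell t.+1 by rewrite /ah_V big_nat_recr.
rewrite [D t.+1]/=; set d := ah_delta ell t.+1 in d0 d1 d_sqr bern *.
set v := ah_v ell t.+1 in bern *.
have -> : (D t + d) ^+ 2 = D t ^+ 2 + 2 * d * D t + d ^+ 2 by ring.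
have -> : lnK * (ah_V ell t + v) + (2 / 3 * lnK + 1) * (D t + d) =
    (lnK * ah_V ell t + (2 / 3 * lnK + 1) * D t) + (lnK * v + 2 / 3 * lnK * d) + d by ring.
lra.
Qed.

Lemma potential_ah_eta_le t : (t < T)%N ->
  potential ell t (ah_eta ell t) <= potential ell t (ah_eta_of K (D t)).
Proof.
move=> tT; rewrite /ah_eta.
have Dp0 := ah_Delta_ge0 (leq_trans (leq_pred t) (ltnW tT)).
have Dpt := ah_Delta_pred_le (ltnW tT).
move: (ah_Delta_ge0 (ltnW tT)); rewrite le_eqVlt => /predU1P[Dz|Dpos].
  by have -> : D t.-1 = D t by apply/le_anti; rewrite Dpt -Dz Dp0.
rewrite (ah_eta_of_gt0 Dpos); move: Dp0; rewrite le_eqVlt => /predU1P[<-|Dppos].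
  by rewrite /ah_eta_of eqxx potential_None_le // divr_gt0 ?lnK_gt0.
rewrite ah_eta_of_gt0 // potential_antitone ?divr_gt0 ?lnK_gt0 //.
by rewrite ler_pM2l ?lnK_gt0 // lef_pV2.
Qed.

Lemma sum_mix_loss_le_potential t : (t <= T)%N ->
  \sum_(1 <= s < t.+1) mix_loss ell s (ah_eta ell s) (ah_weights ell s) <=
  potential ell t (ah_eta ell t).
Proof.
elim: t => [|t IH] tT; first by rewrite big_geq // potential0.
rewrite big_nat_recr //= [ah_eta _ t.+1]/ah_eta /ah_weights /= mix_loss_potential //.
by have := IH (ltnW tT); have := potential_ah_eta_le tT; rewrite /ah_eta => ? ?; lra.
Qed.

Lemma potential_ah_eta_le_Lstar : potential ell T (ah_eta ell T) <= Lstar ell T + D T.-1.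
Proof.
rewrite /ah_eta; move: (ah_Delta_ge0 (leq_pred T)); rewrite le_eqVlt.
case/predU1P => [<-|Dpos]; first by rewrite /ah_eta_of eqxx addr0.
rewrite ah_eta_of_gt0 //; apply: le_trans (potential_le_Lstar _ _ _ _) _ => //.
  by rewrite divr_gt0 ?lnK_gt0.
by rewrite invf_div mulrCA divff ?mulr1 // gt_eqF ?lnK_gt0.
Qed.

Lemma ah_regret_le_Delta : ah_regret ell T <= 2 * D T.
Proof.
have -> : ah_regret ell T =
    \sum_(1 <= s < T.+1) mix_loss ell s (ah_eta ell s) (ah_weights ell s) + D T - Lstar ell T.
  rewrite ah_Delta_sum /ah_regret -big_split /=; congr (_ - _).
  by apply: eq_bigr => s _; rewrite /ah_delta addrC subrK.
have := sum_mix_loss_le_potential (leqnn T); have := potential_ah_eta_le_Lstar.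
have := ah_Delta_pred_le (leqnn T); lra.
Qed.

End AdaHedge.

Theorem theorem6 (R : realType) (K T : nat) (ell : nat -> 'I_K -> R) :
  (1 <= K)%N -> (1 <= T)%N ->
  (forall (t : nat) (k : 'I_K), (1 <= t <= T)%N -> 0 <= ell t k <= 1) ->
  ah_regret ell T <=
    2 * Num.sqrt (ah_V ell T * ln (K%:R : R)) + 4 / 3 * ln (K%:R : R) + 2.
Proof.
move=> K_ge1 _ ell01; have [K_le1 | K_gt1] := leqP K 1.
  have K1 : K = 1%N by apply/eqP; rewrite eqn_leq K_le1 K_ge1.
  subst K; rewrite ah_regret_single_expert ln1 mulr0 sqrtr0 !mulr0 !add0r.
  by rewrite ler0n.
have lnK0 := ltW (@lnK_gt0 R K K_gt1).
have V0 : 0 <= ah_V ell T by apply: sumr_ge0 => s _; exact: ah_v_ge0.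
have b0 : 0 <= 2 / 3 * ln K%:R + 1 :> R by rewrite addr_ge0 ?mulr_ge0.
have := le_sqrt_add_of_sqr_le (ah_Delta_ge0 K_gt1 ell01 (leqnn T)) (mulr_ge0 lnK0 V0) b0
  (ah_Delta_sqr_le K_gt1 ell01 (leqnn T)).
have := ah_regret_le_Delta K_gt1 ell01; rewrite [ah_V _ _ * _]mulrC => ? ?; lra.
Qed.
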